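(* Let $N$ be an orchard network on $X\subseteq[n]$ and let $u,v\in V_T(N)$. If $\mu(u)=\mu(v)$, then $u=v$. Consequently, the extended $\mu$-representation $\boldsymbol\mu(N)$ of an orchard network has no repeated elements, i.e. it is a set.
   Context: A (binary) phylogenetic network on a finite set $X\subseteq[n]=\{1,\dots,n\}$ is a directed acyclic graph $N=(V,A)$ without parallel arcs in which every node is exactly one of: the root (indegree 0, outdegree 1; there is exactly one), a leaf (indegree 1, outdegree 0), a tree node (indegree 1, outdegree 2), or a reticulation (indegree 2, outdegree 1); the leaves are identified with the elements of $X$. $V_T(N)$ denotes the set of leaves and tree nodes, $V_H(N)$ the set of reticulations. $m(u,v)$ is the number of directed paths from $u$ to $v$ (trivial paths allowed). Extended $\mu$-vectors: $\mu_i(u)=m(u,i)$ for $i\in[n]$ (0 if $i\notin X$), $\mu_0(u)=\sum_{h\in V_H(N)} m(u,h)$, $\mu(u)=(\mu_0(u),\dots,\mu_n(u))$; $\boldsymbol\mu(N)$ is the multiset $\{\mu(u)\mid u\in V_T(N)\}$. For distinct leaves $i,j$ with parents $p_i,p_j$: $(i,j)$ is a cherry of $N$ if $p_i=p_j$; a reticulated-cherry of $N$ if $p_i$ is a reticulation, $p_j$ is a tree node and $p_j$ is a parent of $p_i$; reducible if either. Suppressing a node with indegree 1 and outdegree 1 means deleting it and its two arcs and adding an arc from its parent to its child. The reduction $N^{(i,j)}$: if $(i,j)$ is a cherry, delete leaf $i$ and its incoming arc, then suppress $p_i$; if a reticulated-cherry, delete the arc $p_jp_i$ and suppress $p_i$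 and $p_j$. A sequence $S=s_1\cdots s_k$ of pairs is reducible in $N$ if $s_1$ is reducible in $N$ and each $s_t$ is reducible in the network obtained from $N$ by successively reducing $s_1,\dots,s_{t-1}$; $N^S$ denotes the final network; $S$ is complete if $N^S$ is the network $I_x$ consisting of a root joined by an arc to a single leaf $x$. $N$ is an orchard network if it has a complete reducible sequence. *)

From mathcomp Require Import all_boot.
Set Implicit Arguments. Unset Strict Implicit. Unset Printing Implicit Defensive.

(* A (candidate) network lives inside an ambient finite type V of node names:
   its node set is [nodes], its arcs are given by the relation [arc] (so there
   are no parallel arcs), and [lab] labels nodes by natural numbers (only the
   labels of leaves are meaningful).  Reductions only delete nodes/arcs and add
   arcs between existing nodes, so they stay within the same ambient type. *)
Record network (V : finType) := Network {
  nodes : {set V};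
  arc : rel V;
  lab : V -> nat }.

Section Net.
Variables (V : finType) (N : network V).

Definition indeg (x : V) : nat := #|[set y in nodes N | arc N y x]|.
Definition outdeg (x : V) : nat := #|[set y in nodes N | arc N x y]|.

Definition is_root (x : V) := (x \in nodes N) && (indeg x == 0) && (outdeg x == 1).
Definition is_leaf (x : V) := (x \in nodes N) && (indeg x == 1) && (outdeg x == 0).
Definition is_tree (x : V) := (x \in nodes N) && (indeg x == 1) && (outdeg x == 2).
Definition is_ret  (x : V) := (x \in nodes N) && (indeg x == 2) && (outdeg x == 1).

Definition VT : {set V} := [set x | is_leaf x || is_tree x].

(* binary phylogenetic network on some X subset of [n] = {1..n};
   X is the set of leaf labels *)
Definition is_network (n : nat) : Prop :=
  [/\ (forall x y, arc N x y -> (x \in nodes N) && (y \in nodes N)),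
      (forall x y, arc N x y -> ~~ connect (arc N) y x) &
      (forall x, x \in nodes N ->
         [|| is_root x, is_leaf x, is_tree x | is_ret x])] /\
  [/\ (exists r, is_root r /\ (forall x, is_root x -> x = r)),
      (forall x, is_leaf x -> 1 <= lab N x <= n) &
      (forall x y, is_leaf x -> is_leaf y -> lab N x = lab N y -> x = y)].

(* m(u,v): number of directed paths from u to v (trivial path allowed).
   A path with k arcs is a k-tuple of successive nodes; in a DAG on at most
   #|V| nodes every path has fewer than #|V| arcs. *)
Definition npaths (u v : V) : nat :=
  \sum_(k < #|V|) #|[set t : k.-tuple V | path (arc N) u t && (last u t == v)]|.

Definition mu (n : nat) (u : V) : {ffun 'I_n.+1 -> nat} :=
  [ffun k : 'I_n.+1 =>
     if val k == 0 then \sum_(h in nodes N | is_ret h) npaths u h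
     else \sum_(l in nodes N | is_leaf l && (lab N l == val k)) npaths u l].

End Net.

Definition del_arc_nodes (V : finType) (N : network V) (a b : V) (adds : rel V) : network V :=
  Network (nodes N :\ a :\ b)
          (fun x y => (arc N x y && [&& x != a, x != b, y != a & y != b]) || adds x y)
          (lab N).

Definition reduces (V : finType) (N : network V) (ij : nat * nat) (N' : network V) : Prop :=
  exists li lj pi pj : V,
    [/\ is_leaf N li, is_leaf N lj & li != lj] /\
    [/\ lab N li = ij.1, lab N lj = ij.2, arc N pi li & arc N pj lj] /\
    ( (* cherry: delete leaf i and its arc, suppress p_i (parent g, child lj) *)
      (pi = pj /\ exists g, arc N g pi /\
          N' = del_arc_nodes N li pi (fun x y => (x == g) && (y == lj)))
    \/
      (* reticulated cherry: delete arc pj pi, suppress pi (other parent q,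
         child li) and pj (parent g, child lj) *)
      [/\ is_ret N pi, is_tree N pj, arc N pj pi &
          exists q g, [/\ arc N q pi, q != pj, arc N g pj &
            N' = del_arc_nodes N pi pj
                   (fun x y => ((x == q) && (y == li)) || ((x == g) && (y == lj)))]]).

Fixpoint reduce_seq (V : finType) (N : network V) (S : seq (nat * nat)) (N' : network V)
  : Prop :=
  match S with
  | [::] => N' = N
  | s :: S' => exists N1, reduces N s N1 /\ reduce_seq N1 S' N'
  end.

Definition is_trivial (V : finType) (N : network V) : Prop :=
  exists r l : V, [/\ r != l, nodes N = [set r; l], arc N r l &
                      forall a b, arc N a b -> a = r /\ b = l].

Definition orchard (V : finType) (N : network V) : Prop :=
  exists (S : seq (nat * nat)) (N' : network V), reduce_seq N S N' /\ is_trivial N'.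

(* We prove that mu is injective on V_T(N) by
   induction along a complete reducible sequence.  So injectivity on the reduced network transfers to N. *)
From Pilot Require Import Defs.
From mathcomp Require Import all_boot.
Set Implicit Arguments. Unset Strict Implicit. Unset Printing Implicit Defensive.

(* Defs.arc (the arc relation of a network) is shadowed by path.arc. *)
Local Notation arc := Defs.arc (only parsing).

(* In an
   acyclic graph paths have no repeated nodes, which yields the first-arc
   recursion m(u,v) = [u = v] + sum_{u -> c} m(c,v), the last-arc recursion,
   and the fact that m(u,v) > 0 exactly when v is reachable from u. *)
Section PathCounting.
Variables (V : finType) (N : network V).
Hypothesis acyclic : forall x y, arc N x y -> ~~ connect (arc N) y x.

Definition npaths_len (u v : V) (k : nat) : nat :=
  \sum_(t : k.-tuple V) ((path (arc N) u t && (last u t == v)) : nat).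

Lemma card_set_pred (T : finType) (P : pred T) : #|[set x | P x]| = \sum_x (P x : nat).
Proof. by rewrite -sum1dep_card big_mkcond; apply: eq_bigr => x _; case: (P x). Qed.

Lemma npathsE u v : npaths N u v = \sum_(k < #|V|) npaths_len u v k.
Proof. by apply: eq_bigr => k _; rewrite card_set_pred. Qed.

Lemma npaths_len0 u v : npaths_len u v 0 = (u == v).
Proof. by rewrite /npaths_len (big_pred1 [tuple]) // => t; apply/esym/eqP/tuple0. Qed.

Lemma npaths_lenS u v k :
  npaths_len u v k.+1 = \sum_(c | arc N u c) npaths_len c v k.
Proof.
rewrite /npaths_len (reindex (fun p : V * k.-tuple V => [tuple of p.1 :: p.2])) /=; last first.
  exists (fun t : k.+1.-tuple V => (thead t, [tuple of behead t])).
    by move=> [x t] _ /=; rewrite theadE; congr pair; apply: val_inj.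
  by move=> t _ /=; rewrite [RHS]tuple_eta.
rewrite -(pair_big predT predT (fun x (t : k.-tuple V) =>
   ((arc N u x && path (arc N) x t && (last x t == v)) : nat))) /=.
rewrite [RHS]big_mkcond /=; apply: eq_bigr => c _.
by case: (arc N u c) => //=; rewrite big1.
Qed.

Lemma path_uniq_acyclic u t : path (arc N) u t -> uniq (u :: t).
Proof.
elim: t u => [|y t IH] u // /andP[Huy Hp].
rewrite cons_uniq (IH _ Hp) andbT; apply/negP => Hu.
by have := path_connect Hp Hu; apply/negP; apply: acyclic.
Qed.

Lemma path_size_lt u t : path (arc N) u t -> size t < #|V|.
Proof.
by move/path_uniq_acyclic/card_uniqP => H; have := max_card (mem (u :: t)); rewrite H.
Qed.

Lemma npaths_first_arc u v :
  npaths N u v = (u == v) + \sum_(c | arc N u c) npaths N c v.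
Proof.
rewrite npathsE.
have : 0 < #|V| by apply/card_gt0P; exists u.
case E: #|V| => [//|K] _.
rewrite big_ord_recl npaths_len0; congr addn.
rewrite (eq_bigr (fun k : 'I_K => \sum_(c | arc N u c) npaths_len c v k)); last first.
  by move=> k _; rewrite lift0 npaths_lenS.
rewrite exchange_big /=; apply: eq_bigr => c Huc.
rewrite npathsE E big_ord_recr /=.
suff -> : npaths_len c v K = 0 by rewrite addn0.
apply: big1 => t _; case Hp: (path _ _ _) => //=.
have : path (arc N) u (c :: t) by rewrite /= Huc.
by move/path_size_lt; rewrite E /= size_tuple ltnn.
Qed.

Lemma npaths_gt0 u v : (0 < npaths N u v) = connect (arc N) u v.
Proof.
apply/idP/idP.
  apply: contraLR => Hc.
  rewrite -leqNgt leqn0 npathsE sum_nat_eq0; apply/forallP => k; apply/implyP => _.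
  rewrite /npaths_len sum_nat_eq0; apply/forallP => t; apply/implyP => _.
  case H: (path _ _ _ && _) => //; case/andP: H => Hp /eqP Hl.
  by case/negP: Hc; apply/connectP; exists t.
case/connectP => p Hp ->.
rewrite npathsE (bigD1 (Ordinal (path_size_lt Hp))) //= ltn_addr //.
by rewrite /npaths_len (bigD1 (in_tuple p)) //= Hp eqxx.
Qed.

(* The first-arc recursion has at most one solution on a set D closed under
   arcs: by well-founded induction on the number of nodes reachable from w. *)
Lemma path_recursion_unique (D : {set V}) (b f g : V -> nat) :
  (forall x y, x \in D -> arc N x y -> y \in D) ->
  (forall w, w \in D -> f w = b w + \sum_(c | arc N w c) f c) ->
  (forall w, w \in D -> g w = b w + \sum_(c | arc N w c) g c) ->
  forall w, w \in D -> f w = g w.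
Proof.
move=> closedD Hf Hg w.
elim: {w}_.+1 {-2}w (ltnSn #|[set y | connect (arc N) w y]|) => // m IH w Hm Hw.
rewrite Hf // Hg //; congr addn; apply: eq_bigr => c Hc.
apply: IH; last exact: closedD Hw Hc.
rewrite -ltnS; apply: leq_trans Hm; rewrite ltnS; apply: proper_card; apply/properP; split.
  by apply/subsetP => y; rewrite !inE; apply: connect_trans; apply: connect1.
by exists w; rewrite !inE ?connect0 //; apply: acyclic.
Qed.

Lemma npaths_unique_solution (D : {set V}) (x : V) (f : V -> nat) :
  (forall y z, y \in D -> arc N y z -> z \in D) ->
  (forall w, w \in D -> f w = (w == x) + \sum_(c | arc N w c) f c) ->
  forall w, w \in D -> npaths N w x = f w.
Proof.
move=> closedD Hf; apply: (path_recursion_unique closedD _ Hf) => w _.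
exact: npaths_first_arc.
Qed.

Lemma sum_indicator (P : pred V) w : \sum_(p | P p) ((p == w) : nat) = P w.
Proof.
case Pw: (P w).
  by rewrite (bigD1 w) // eqxx big1 // => p /andP[_ /negPf ->].
by apply: big1 => p Pp; case: eqP => // E; rewrite -E Pp in Pw.
Qed.

(* Last-arc recursion: both sides satisfy the first-arc recursion in w. *)
Lemma npaths_last_arc w x :
  npaths N w x = (w == x) + \sum_(p | arc N p x) npaths N w p.
Proof.
pose f w := (w == x) + \sum_(p | arc N p x) npaths N w p.
apply: (@path_recursion_unique setT (fun w => (w == x) : nat) (npaths N ^~ x) f) => //.
  by move=> y _; rewrite npaths_first_arc.
move=> y _; rewrite /f; congr addn.
under eq_bigr => p _ do rewrite npaths_first_arc.
rewrite big_split [RHS]big_split /= sum_indicator [X in _ = _ + X]exchange_big /=.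
by congr addn; under eq_bigr => p _ do rewrite eq_sym; rewrite sum_indicator.
Qed.

End PathCounting.

(* The part of [is_network] that the argument uses and that reductions
   preserve: everything except the unique-root condition. *)
Definition wf_network (n : nat) (V : finType) (N : network V) : Prop :=
 [/\ forall x y, arc N x y -> (x \in nodes N) && (y \in nodes N),
     forall x y, arc N x y -> ~~ connect (arc N) y x,
     forall x, x \in nodes N -> [|| is_root N x, is_leaf N x, is_tree N x | is_ret N x],
     forall x, is_leaf N x -> 0 < lab N x <= n &
     forall x y, is_leaf N x -> is_leaf N y -> lab N x = lab N y -> x = y].

Lemma network_wf n (V : finType) (N : network V) : is_network N n -> wf_network n N.
Proof. by case=> -[H1 H2 H3] [_ H5 H6]; split. Qed.

Lemma card1_eq (T : finType) (A : {set T}) a b : #|A| = 1 -> a \in A -> b \in A -> a = b.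
Proof. by move/eqP/cards1P=> [z ->]; rewrite !inE => /eqP -> /eqP ->. Qed.

Lemma card2_eq (T : finType) (A : {set T}) a b c : #|A| = 2 -> a \in A -> b \in A ->
  a != b -> c \in A -> c = a \/ c = b.
Proof.
move=> A2 Aa Ab ab Ac; case: (eqVneq c a) => [->|ca]; first by left.
right; apply: (@card1_eq _ (A :\ a)); rewrite ?inE ?ca ?Ac // ?(eq_sym b) ?ab ?Ab //.
by move: A2; rewrite (cardsD1 a) Aa => -[].
Qed.

Section LocalStructure.
Variables (n : nat) (V : finType) (N : network V).
Hypothesis wfN : wf_network n N.

Lemma arc_nodes x y : arc N x y -> (x \in nodes N) /\ (y \in nodes N).
Proof. by move=> xy; case: wfN => H _ _ _ _; apply/andP/H. Qed.

Lemma acyclicN x y : arc N x y -> ~~ connect (arc N) y x.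
Proof. by case: wfN => _ H _ _ _; apply: H. Qed.

Lemma in_parents x y : (y \in [set y in nodes N | arc N y x]) = arc N y x.
Proof. by rewrite inE; apply/andP/idP => [[]//|H]; split => //; case: (arc_nodes H). Qed.

Lemma in_children x y : (y \in [set y in nodes N | arc N x y]) = arc N x y.
Proof. by rewrite inE; apply/andP/idP => [[]//|H]; split => //; case: (arc_nodes H). Qed.

Lemma unique_parent x p y : indeg N x = 1 -> arc N p x -> arc N y x -> y = p.
Proof. by move=> H Hp Hy; apply: (card1_eq H); rewrite in_parents. Qed.

Lemma leaf_parent x p y : is_leaf N x -> arc N p x -> arc N y x -> y = p.
Proof. by case/andP=> /andP[_ /eqP H] _; apply: unique_parent. Qed.

Lemma tree_parent x p y : is_tree N x -> arc N p x -> arc N y x -> y = p.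
Proof. by case/andP=> /andP[_ /eqP H] _; apply: unique_parent. Qed.

Lemma leaf_nochild x y : is_leaf N x -> ~~ arc N x y.
Proof.
case/andP=> _ /eqP /cards0_eq H; apply/negP => xy.
by have := in_children x y; rewrite H inE xy.
Qed.

Lemma arc_neq x y : arc N x y -> x != y.
Proof. by move=> xy; apply: contraTneq xy => ->; apply/negP => yy; move: (acyclicN yy); rewrite connect0. Qed.

Lemma leaf_not_parent l x y : is_leaf N l -> arc N x y -> x != l.
Proof. by move=> lL xy; apply: contraTneq xy => ->; apply: leaf_nochild. Qed.

Lemma tree_child x a b c : is_tree N x -> arc N x a -> arc N x b -> a != b ->
  arc N x c -> c = a \/ c = b.
Proof. by case/andP=> _ /eqP H Ha Hb ab Hc; apply: (card2_eq H); rewrite ?in_children. Qed.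

Lemma ret_parent x a b c : is_ret N x -> arc N a x -> arc N b x -> a != b ->
  arc N c x -> c = a \/ c = b.
Proof. by case/andP=> /andP[_ /eqP H] _ Ha Hb ab Hc; apply: (card2_eq H); rewrite ?in_parents. Qed.

Lemma ret_child x a b : is_ret N x -> arc N x a -> arc N x b -> b = a.
Proof. by case/andP=> _ /eqP H Ha Hb; apply: (card1_eq H); rewrite in_children. Qed.

Lemma tree_children x : is_tree N x -> exists a b, [/\ a != b, arc N x a & arc N x b].
Proof.
case/andP=> _ /eqP H.
have /cards2P [a [b [ab E]]] : #|[set y in nodes N | arc N x y]| == 2 by apply/eqP.
by exists a, b; split => //; rewrite -in_children E !inE eqxx ?orbT.
Qed.

Lemma two_children_tree x a b : arc N x a -> arc N x b -> a != b -> is_tree N x.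
Proof.
move=> Ha Hb ab; have xN : x \in nodes N by case: (arc_nodes Ha).
have : #|[set a; b]| <= outdeg N x.
  apply: subset_leq_card; apply/subsetP => y.
  by rewrite in_children !inE => /orP[] /eqP ->.
rewrite cards2 ab => out2.
case: wfN => _ _ /(_ x xN) + _ _.
rewrite /is_root /is_leaf /is_tree /is_ret xN /=.
by case/or4P => /andP[_ /eqP E] //; rewrite E in out2.
Qed.

Lemma leaf_not_tree x : is_leaf N x -> ~~ is_tree N x.
Proof. by case/andP => _ /eqP E; rewrite /is_tree E andbF. Qed.
Lemma leaf_not_ret x : is_leaf N x -> ~~ is_ret N x.
Proof. by case/andP => _ /eqP E; rewrite /is_ret E andbF. Qed.
Lemma tree_not_ret x : is_tree N x -> ~~ is_ret N x.
Proof. by case/andP => _ /eqP E; rewrite /is_ret E andbF. Qed.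

Lemma VT_nodes u : u \in VT N -> u \in nodes N.
Proof. by rewrite inE => /orP[] /andP[] /andP[]. Qed.

(* Every node reaches a leaf: follow children until outdegree 0. *)
Lemma reach_leaf x : x \in nodes N -> exists l, is_leaf N l /\ connect (arc N) x l.
Proof.
elim: {x}_.+1 {-2}x (ltnSn #|[set y | connect (arc N) x y]|) => // m IH x Hm xN.
case E: (outdeg N x) => [|k].
  exists x; split; last exact: connect0.
  case: wfN => _ _ /(_ x xN) + _ _.
  rewrite /is_root /is_leaf /is_tree /is_ret xN E /=.
  by case/or4P => // /andP[_ /eqP].
have /card_gt0P [y] : 0 < #|[set y in nodes N | arc N x y]| by rewrite -/(outdeg N x) E.
rewrite in_children => xy; have yN : y \in nodes N by case: (arc_nodes xy).
have [|l [Hl yl]] := IH y _ yN.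
  rewrite -ltnS; apply: leq_trans Hm; rewrite ltnS; apply: proper_card; apply/properP; split.
    by apply/subsetP => z; rewrite !inE; apply: connect_trans; apply: connect1.
  by exists x; rewrite !inE ?connect0 //; apply: acyclicN.
by exists l; split => //; apply: connect_trans yl; apply: connect1.
Qed.

Lemma sum_children x a b (F : V -> nat) : is_tree N x -> arc N x a -> arc N x b -> a != b ->
  \sum_(c | arc N x c) F c = F a + F b.
Proof.
move=> xT Ha Hb ab; rewrite (bigD1 a) //; congr addn; apply: big_pred1 => c /=.
apply/andP/eqP => [[Hc ca]|->]; last by rewrite Hb eq_sym ab.
by case: (tree_child xT Ha Hb ab Hc) => // E; rewrite E eqxx in ca.
Qed.

Lemma sum_parent_leaf x p (F : V -> nat) : is_leaf N x -> arc N p x ->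
  \sum_(q | arc N q x) F q = F p.
Proof.
move=> xL Hp; apply: big_pred1 => q /=; apply/idP/eqP => [Hq|->//].
exact: leaf_parent xL Hp Hq.
Qed.

Lemma sum_parents_ret x a b (F : V -> nat) : is_ret N x -> arc N a x -> arc N b x -> a != b ->
  \sum_(c | arc N c x) F c = F a + F b.
Proof.
move=> xR Ha Hb ab; rewrite (bigD1 a) //; congr addn; apply: big_pred1 => c /=.
apply/andP/eqP => [[Hc ca]|->]; last by rewrite Hb eq_sym ab.
by case: (ret_parent xR Ha Hb ab Hc) => // E; rewrite E eqxx in ca.
Qed.

Lemma sum_child_ret x a (F : V -> nat) : is_ret N x -> arc N x a ->
  \sum_(c | arc N x c) F c = F a.
Proof.
move=> xR Ha; apply: big_pred1 => c /=; apply/idP/eqP => [Hc|->//].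
exact: ret_child xR Ha Hc.
Qed.

Lemma npaths_gt0N u v : (0 < npaths N u v) = connect (arc N) u v.
Proof. exact/npaths_gt0/acyclicN. Qed.

Lemma npaths_firstN u v : npaths N u v = (u == v) + \sum_(c | arc N u c) npaths N c v.
Proof. exact/npaths_first_arc/acyclicN. Qed.

Lemma npaths_lastN u v : npaths N u v = (u == v) + \sum_(c | arc N c v) npaths N u c.
Proof. exact/npaths_last_arc/acyclicN. Qed.

Lemma npaths_child_le v c x : arc N v c -> npaths N c x <= npaths N v x.
Proof. by move=> vc; rewrite [leqRHS]npaths_firstN (bigD1 c) //= addnCA leq_addr. Qed.

Lemma npaths_from_leaf x y : is_leaf N x -> npaths N x y = (x == y).
Proof.
move=> xL; rewrite npaths_firstN big_pred0 ?addn0 // => c.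
exact/negbTE/leaf_nochild.
Qed.

Lemma npaths_to_leaf l p v : is_leaf N l -> arc N p l ->
  npaths N v l = (v == l) + npaths N v p.
Proof. by move=> lL pl; rewrite npaths_lastN (sum_parent_leaf _ lL pl). Qed.

Lemma escape_leaf v x : v \in VT N -> v != x -> npaths N v x = 1 ->
  exists c l, [/\ arc N v c, npaths N c x = 0, is_leaf N l & connect (arc N) c l].
Proof.
rewrite inE => /orP[vL|vT] vx one.
  by move: one; rewrite npaths_from_leaf // (negPf vx).
have [a [b [ab va vb]]] := tree_children vT.
move: one; rewrite npaths_firstN (negPf vx) (sum_children _ vT va vb ab) /= => one.
have [c [vc c0]] : exists c, arc N v c /\ npaths N c x = 0.
  case Ea: (npaths N a x) => [|k]; first by exists a.
  exists b; split => //; move: one; rewrite Ea add0n addSn => -[] /eqP.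
  by rewrite addn_eq0 => /andP[_ /eqP].
have [l [lL cl]] := reach_leaf (arc_nodes vc).2.
by exists c, l.
Qed.

End LocalStructure.

Section SumBookkeeping.
Variable V : finType.

Lemma sum_swap_index (P1 P2 : pred V) (F : V -> nat) a b :
  P1 a -> ~~ P2 a -> P2 b -> ~~ P1 b -> F a = F b ->
  (forall c, c != a -> c != b -> P1 c = P2 c) ->
  \sum_(c | P1 c) F c = \sum_(c | P2 c) F c.
Proof.
move=> P1a P2a P2b P1b Fab H.
rewrite (bigD1 a) // (bigD1 b P2b) Fab; congr addn; apply: eq_bigl => c.
case: (eqVneq c a) => [->|ca]; first by rewrite andbF (negPf P2a).
case: (eqVneq c b) => [->|cb]; first by rewrite andbF andbT (negPf P1b).
by rewrite !andbT H.
Qed.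

Lemma sum_split2 (P : pred V) (F : V -> nat) a b : a != b ->
  \sum_(c | P c) F c = \sum_(c | P c && (c != a) && (c != b)) F c + P a * F a + P b * F b.
Proof.
move=> ab; rewrite (bigID (fun c => (c == a) || (c == b))) /= addnC -addnA; congr addn.
  by apply: eq_bigl => c; rewrite negb_or andbA.
rewrite big_mkcond (bigD1 a) //= (bigD1 b) /=; last by rewrite eq_sym.
rewrite big1 ?addn0; last by move=> c /andP[/negPf -> /negPf ->]; rewrite andbF.
by rewrite !eqxx orbT /=; case: (P a); case: (P b); rewrite ?mul1n ?mul0n.
Qed.

End SumBookkeeping.

Lemma acyclic_shortcut (V : finType) (e e1 : rel V) :
  (forall x y, e x y -> ~~ connect e y x) ->
  (forall x y, e1 x y -> exists z, e x z /\ connect e z y) ->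
  forall x y, e1 x y -> ~~ connect e1 y x.
Proof.
move=> acyclic short x y xy; apply/negP => yx.
have sub : subrel e1 (connect e).
  by move=> u v /short [z [uz zv]]; apply: connect_trans zv; apply: connect1.
have [z [xz zy]] := short _ _ xy.
by move: (acyclic _ _ xz); rewrite (connect_trans zy (connect_sub sub yx)).
Qed.

Lemma indegE (V : finType) (N : network V) x :
  (forall y, arc N y x -> y \in nodes N) -> indeg N x = \sum_(y | arc N y x) 1.
Proof.
move=> H; rewrite sum1dep_card /indeg; apply: eq_card => y; rewrite !inE.
by apply/andP/idP => [[]//|Hy]; rewrite H.
Qed.

Lemma outdegE (V : finType) (N : network V) x :
  (forall y, arc N x y -> y \in nodes N) -> outdeg N x = \sum_(y | arc N x y) 1.
Proof.
move=> H; rewrite sum1dep_card /outdeg; apply: eq_card => y; rewrite !inE.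
by apply/andP/idP => [[]//|Hy]; rewrite H.
Qed.

(* A reduction yields a network N1 on a subset of the nodes of N with the same
   labels, in which every surviving node keeps its in- and outdegree. *)
Section DegreePreservingSubnetwork.
Variables (n : nat) (V : finType) (N N1 : network V).
Hypotheses (sub1 : {subset nodes N1 <= nodes N})
  (indeg1 : forall x, x \in nodes N1 -> indeg N1 x = indeg N x)
  (outdeg1 : forall x, x \in nodes N1 -> outdeg N1 x = outdeg N x).

Lemma same_types x : x \in nodes N1 ->
  [/\ is_root N1 x = is_root N x, is_leaf N1 x = is_leaf N x,
      is_tree N1 x = is_tree N x & is_ret N1 x = is_ret N x].
Proof. by move=> x1; rewrite /is_root /is_leaf /is_tree /is_ret indeg1 // outdeg1 // x1 sub1. Qed.

Lemma same_VT u : u \in VT N -> u \in nodes N1 -> u \in VT N1.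
Proof. by move=> uT u1; move: uT; rewrite !inE; case: (same_types u1) => _ -> -> _. Qed.

Lemma wf_subnetwork : wf_network n N -> lab N1 = lab N ->
  (forall x y, arc N1 x y -> (x \in nodes N1) && (y \in nodes N1)) ->
  (forall x y, arc N1 x y -> ~~ connect (arc N1) y x) -> wf_network n N1.
Proof.
case=> _ _ types labs labinj lab1 arcs1 acyclic1.
have leaf1 x : is_leaf N1 x -> is_leaf N x.
  by move=> xL; have /same_types[_ <- _ _] : x \in nodes N1 by case/andP: xL => /andP[].
split; rewrite ?lab1 //.
- by move=> x x1; case: (same_types x1) => -> -> -> ->; apply/types/sub1.
- by move=> x /leaf1; apply: labs.
- by move=> x y /leaf1 xL /leaf1 yL; apply: labinj.
Qed.

End DegreePreservingSubnetwork.

(* A reduction deletes two nodes a and b.  A property of nodes that is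
   unchanged on the surviving nodes and fails at a and b selects the same
   nodes before and after the reduction. *)
Lemma select_surviving (V : finType) (A : {set V}) a b (P1 P : pred V) h :
  (forall x, x \in A :\ a :\ b -> P1 x = P x) -> ~~ P a -> ~~ P b ->
  (h \in A :\ a :\ b) && P1 h = (h \in A) && P h.
Proof.
move=> P1P Pa Pb; case h1: (h \in A :\ a :\ b); first by move: (h1); rewrite P1P // !inE => /and3P[_ _ ->].
move: h1; rewrite !inE; case: (eqVneq h b) => [->|_]; first by rewrite (negPf Pb) andbF.
by case: (eqVneq h a) => [->|_] /= => [_|->]; rewrite ?(negPf Pa) ?andbF.
Qed.

Section MuCoordinates.
Variables (n : nat) (V : finType) (N : network V).
Hypothesis wfN : wf_network n N.

Lemma lab_lt l : is_leaf N l -> lab N l < n.+1.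
Proof. by case: wfN => _ _ _ H _ /H /andP[_]; rewrite ltnS. Qed.

Lemma lab_pos l : is_leaf N l -> 0 < lab N l.
Proof. by case: wfN => _ _ _ H _ /H /andP[]. Qed.

Lemma mu_leaf w l : is_leaf N l -> mu N n w (inord (lab N l)) = npaths N w l.
Proof.
move=> lL; rewrite /mu ffunE.
have -> : val (inord (lab N l) : 'I_n.+1) = lab N l by apply/inordK/lab_lt.
case: eqP => [E0|_]; first by have := lab_pos lL; rewrite E0.
apply: big_pred1 => h /=; apply/andP/eqP => [[_ /andP[hL /eqP E]]|->].
  by case: wfN => _ _ _ _ H; apply: H.
by split; [case/andP: lL => /andP[] | rewrite lL eqxx].
Qed.

Lemma mu_ret w : mu N n w ord0 = \sum_(h in nodes N | is_ret N h) npaths N w h.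
Proof. by rewrite /mu ffunE. Qed.

End MuCoordinates.

(* Reducing a cherry (li, lj) with common parent p, whose parent is g:
   li and p disappear and g becomes the parent of lj.  Path counts between
   surviving nodes are unchanged, and the mu-vector of a surviving node only
   loses its li-coordinate.  Conversely no other node of V_T(N) shares the
   mu-vector of li or of p.  Hence mu is injective on V_T(N) as soon as it is
   injective on V_T(N1). *)
Module Cherry.
Section Reduction.
Variables (n : nat) (V : finType) (N : network V) (li lj p g : V).
Hypotheses (wfN : wf_network n N) (liL : is_leaf N li) (ljL : is_leaf N lj)
  (li_lj : li != lj) (p_li : arc N p li) (p_lj : arc N p lj) (g_p : arc N g p).
Local Notation N1 := (del_arc_nodes N li p (fun x y => (x == g) && (y == lj))).

Lemma p_tree : is_tree N p. Proof. exact: (two_children_tree wfN p_li p_lj li_lj). Qed.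
Lemma parent_li y : arc N y li -> y = p. Proof. exact: (leaf_parent wfN liL p_li). Qed.
Lemma parent_lj y : arc N y lj -> y = p. Proof. exact: (leaf_parent wfN ljL p_lj). Qed.
Lemma parent_p y : arc N y p -> y = g. Proof. exact: (tree_parent wfN p_tree g_p). Qed.
Lemma child_p c : arc N p c -> c = li \/ c = lj. Proof. exact: (tree_child wfN p_tree p_li p_lj li_lj). Qed.

Lemma neq_p_li : p != li. Proof. exact: (leaf_not_parent wfN liL p_li). Qed.
Lemma neq_p_lj : p != lj. Proof. exact: (leaf_not_parent wfN ljL p_lj). Qed.
Lemma neq_g_p : g != p. Proof. exact: (arc_neq wfN g_p). Qed.
Lemma neq_g_li : g != li. Proof. exact: (leaf_not_parent wfN liL g_p). Qed.

Lemma nodes1E x : (x \in nodes N1) = [&& x != p, x != li & x \in nodes N].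
Proof. by rewrite /= !in_setD1. Qed.

Lemma nodes1_sub : {subset nodes N1 <= nodes N}.
Proof. by move=> x; rewrite nodes1E => /and3P[]. Qed.

Lemma arcs1 x y : arc N1 x y -> (x \in nodes N1) && (y \in nodes N1).
Proof.
rewrite /= => /orP[/andP[xy /and4P[x_li x_p y_li y_p]]|/andP[/eqP -> /eqP ->]].
  by case: (arc_nodes wfN xy) => xN yN; rewrite !nodes1E x_li x_p y_li y_p xN yN.
have [gN _] := arc_nodes wfN g_p; have [_ ljN] := arc_nodes wfN p_lj.
by rewrite !nodes1E neq_g_p neq_g_li gN (eq_sym lj) neq_p_lj eq_sym li_lj ljN.
Qed.

(* The new arc g -> lj shortcuts the path g -> p -> lj. *)
Lemma acyclic1 x y : arc N1 x y -> ~~ connect (arc N1) y x.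
Proof.
apply: acyclic_shortcut; first exact: acyclicN wfN.
move=> a b; rewrite /= => /orP[/andP[ab _]|/andP[/eqP -> /eqP ->]].
  by exists b; split => //; apply: connect0.
by exists p; split => //; apply: connect1.
Qed.

Lemma parents1 x c : x \in nodes N1 ->
  arc N1 c x = (arc N c x && (c != p)) || ((c == g) && (x == lj)).
Proof.
rewrite nodes1E => /and3P[x_p x_li _] /=; rewrite x_p x_li.
case: (eqVneq c p) => [->|c_p]; first by rewrite (eq_sym p g) (negPf neq_g_p) /= !andbF.
case: (eqVneq c li) => [->|c_li].
  by rewrite (negPf (leaf_nochild wfN x liL)) eq_sym (negPf neq_g_li).
by rewrite !andbT.
Qed.

Lemma children1 x c : x \in nodes N1 ->
  arc N1 x c = (arc N x c && (c != p)) || ((x == g) && (c == lj)).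
Proof.
rewrite nodes1E => /and3P[x_p x_li _] /=; rewrite x_p x_li.
case: (eqVneq c p) => [->|c_p]; first by rewrite (negPf neq_p_lj) !andbF.
case: (eqVneq c li) => [->|c_li]; last by rewrite !andbT.
case x_to_li: (arc N x li); last by rewrite (negPf li_lj) andbF.
by move: x_p; rewrite (parent_li x_to_li) eqxx.
Qed.

(* Summing over children in N1 replaces the child p of g by lj; this does not
   matter for functions taking the same value at p and lj. *)
Lemma sum_children1 x (F : V -> nat) : x \in nodes N1 -> F p = F lj ->
  \sum_(c | arc N1 x c) F c = \sum_(c | arc N x c) F c.
Proof.
move=> + Fp; case: (eqVneq x g) => [->|x_g] x1.
  apply/esym; apply: (@sum_swap_index _ _ _ _ p lj) => //.
  - by rewrite children1 // !eqxx andbF (negPf neq_p_lj).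
  - by rewrite children1 // !eqxx orbT.
  - by apply/negP => /parent_lj E; move: neq_g_p; rewrite E eqxx.
  - by move=> c c_p c_lj; rewrite children1 // c_p (negPf c_lj) andbT andbF orbF.
apply: eq_bigl => c; rewrite children1 // (negPf x_g) orbF.
case xc: (arc N x c) => //=; apply/negP => /eqP E; rewrite E in xc.
by rewrite (parent_p xc) eqxx in x_g.
Qed.

Lemma outdeg1 x : x \in nodes N1 -> outdeg N1 x = outdeg N x.
Proof.
move=> x1; rewrite outdegE; last by move=> y /arcs1/andP[].
rewrite outdegE; last by move=> y /(arc_nodes wfN)[].
exact: sum_children1.
Qed.

(* Only lj changes its parent (from p to g). *)
Lemma indeg1 x : x \in nodes N1 -> indeg N1 x = indeg N x.
Proof.
move=> x1; rewrite indegE; last by move=> y /arcs1/andP[].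
rewrite indegE; last by move=> y /(arc_nodes wfN)[].
case: (eqVneq x lj) => [E|x_lj].
  rewrite (eq_bigl (pred1 g)) => [|c]; last first.
    change (arc N1 c x = (c == g)); rewrite parents1 // E eqxx andbT.
    by case cl: (arc N c lj) => //=; rewrite (parent_lj cl) eqxx.
  by rewrite big_pred1_eq E (big_pred1 p) // => c; apply/idP/eqP => [/parent_lj|->].
apply: eq_bigl => c; rewrite parents1 // (negPf x_lj) andbF orbF.
case cx: (arc N c x) => //=; apply/negP => /eqP E; rewrite E in cx.
case: (child_p cx) => E2; last by rewrite E2 eqxx in x_lj.
by move: x1; rewrite nodes1E E2 eqxx andbF.
Qed.

Lemma wf1 : wf_network n N1.
Proof. exact: (wf_subnetwork nodes1_sub indeg1 outdeg1 wfN _ arcs1 acyclic1). Qed.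

Lemma npaths1 w x : w \in nodes N1 -> x \in nodes N1 -> npaths N1 w x = npaths N w x.
Proof.
move=> w1 x1; apply: (npaths_unique_solution acyclic1 (f := npaths N ^~ x)) w1.
  by move=> y z _ /arcs1/andP[].
move=> y y1.
rewrite (npaths_firstN wfN); congr addn; apply/esym/sum_children1 => //.
rewrite (npaths_firstN wfN) (sum_children wfN _ p_tree p_li p_lj li_lj).
move: x1; rewrite nodes1E => /and3P[x_p x_li _].
by rewrite !(npaths_from_leaf wfN) // !(eq_sym _ x) (negPf x_p) (negPf x_li).
Qed.

Lemma types1 x : x \in nodes N1 ->
  [/\ is_root N1 x = is_root N x, is_leaf N1 x = is_leaf N x,
      is_tree N1 x = is_tree N x & is_ret N1 x = is_ret N x].
Proof. exact: (same_types nodes1_sub indeg1 outdeg1). Qed.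

Lemma mu1E w k : w \in nodes N1 ->
  mu N1 n w k = if val k == lab N li then 0 else mu N n w k.
Proof.
move=> w1; have p_leaf : ~~ is_leaf N p by apply/negP => /leaf_not_tree; rewrite p_tree.
rewrite /mu !ffunE /=; case: (eqVneq (val k) (lab N li)) => [->|k_li].
  rewrite eqn0Ngt (lab_pos wfN liL) /=.
  apply: big_pred0 => h; apply/negP => /andP[h1 /andP[hL /eqP E]].
  have {}hL : is_leaf N h by case: (types1 h1) hL => _ ->.
  have h_li : h = li by case: wfN => _ _ _ _; apply.
  by move: h1; rewrite nodes1E h_li eqxx andbF.
case: (val k == 0); apply: eq_big => [h|h /andP[h1 _]]; try exact: npaths1.
  apply: (@select_surviving _ (nodes N) li p (is_ret N1) (is_ret N)).
  - by move=> x /types1[].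
  - exact: leaf_not_ret liL.
  - exact: tree_not_ret p_tree.
apply: (@select_surviving _ (nodes N) li p (fun x => is_leaf N1 x && (lab N x == k)) (fun x => is_leaf N x && (lab N x == k))).
- by move=> x /types1[_ -> _ _].
- by rewrite eq_sym (negPf k_li) andbF.
- by rewrite (negPf p_leaf).
Qed.

Lemma npaths_from_p x : npaths N p x = (p == x) + ((li == x) + (lj == x)).
Proof.
by rewrite (npaths_firstN wfN) (sum_children wfN _ p_tree p_li p_lj li_lj) !(npaths_from_leaf wfN).
Qed.

(* A node with the mu-vector of li reaches li, hence p, hence lj; but li
   does not reach lj. *)
Lemma mu_li_unique v : mu N n v = mu N n li -> v = li.
Proof.
move=> E; apply/eqP/negPn/negP => v_li.
have : npaths N v li = 1.
  by rewrite -(mu_leaf wfN v liL) E (mu_leaf wfN li liL) (npaths_from_leaf wfN _ liL) eqxx.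
rewrite (npaths_to_leaf wfN _ liL p_li) (negPf v_li) add0n => vp.
have : 0 < npaths N v lj.
  rewrite (npaths_gt0N wfN); apply: connect_trans (connect1 p_lj).
  by rewrite -(npaths_gt0N wfN) vp.
by rewrite -(mu_leaf wfN v ljL) E (mu_leaf wfN li ljL) (npaths_from_leaf wfN _ liL) (negPf li_lj).
Qed.

(* A node v of V_T(N) with the mu-vector of p has a single path to p; a child
   of v avoiding p reaches a leaf other than li and lj, which p does not. *)
Lemma mu_p_unique v : v \in VT N -> mu N n v = mu N n p -> v = p.
Proof.
move=> vT E; apply/eqP/negPn/negP => v_p.
have v_li : v != li.
  apply/eqP => v_li; move: E; rewrite v_li => /ffunP /(_ (inord (lab N lj))).
  rewrite !(mu_leaf wfN _ ljL) (npaths_from_leaf wfN _ liL) npaths_from_p.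
  by rewrite (negPf li_lj) eqxx (negPf neq_p_lj) addn1.
have one_p : npaths N v p = 1.
  have : npaths N v li = 1.
    rewrite -(mu_leaf wfN v liL) E (mu_leaf wfN p liL) npaths_from_p.
    by rewrite eqxx (negPf neq_p_li) (eq_sym lj) (negPf li_lj).
  by rewrite (npaths_to_leaf wfN _ liL p_li) (negPf v_li).
have [c [l [vc c0 lL cl]]] := escape_leaf wfN vT v_p one_p.
have c_leaf l' : is_leaf N l' -> arc N p l' -> c != l'.
  by move=> l'L pl'; apply: contra_neq v_p => E'; rewrite E' in vc; exact: (leaf_parent wfN l'L pl' vc).
have avoid l' : is_leaf N l' -> arc N p l' -> l != l'.
  move=> l'L pl'; apply: contraTneq cl => ->.
  by rewrite -(npaths_gt0N wfN) (npaths_to_leaf wfN _ l'L pl') (negPf (c_leaf l' l'L pl')) c0.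
have : 0 < npaths N v l by rewrite (npaths_gt0N wfN); apply: connect_trans cl; apply: connect1.
rewrite -(mu_leaf wfN v lL) E (mu_leaf wfN p lL) npaths_from_p.
have p_l : p != l by apply: contraTneq lL => <-; apply/negP => /leaf_not_tree; rewrite p_tree.
by rewrite (negPf p_l) !(eq_sym _ l) (negPf (avoid li liL p_li)) (negPf (avoid lj ljL p_lj)).
Qed.

Lemma cherry_mu_injective :
  {in VT N1 &, injective (mu N1 n)} -> {in VT N &, injective (mu N n)}.
Proof.
move=> inj1 u v uT vT E.
case: (eqVneq u li) => [Eu|u_li]; first by subst u; rewrite (mu_li_unique (esym E)).
case: (eqVneq u p) => [Eu|u_p]; first by subst u; rewrite (mu_p_unique vT (esym E)).
case: (eqVneq v li) => [Ev|v_li]; first by subst v; rewrite (mu_li_unique E).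
case: (eqVneq v p) => [Ev|v_p]; first by subst v; rewrite (mu_p_unique uT E).
have u1 : u \in nodes N1 by rewrite nodes1E u_li u_p (VT_nodes uT).
have v1 : v \in nodes N1 by rewrite nodes1E v_li v_p (VT_nodes vT).
apply: inj1; rewrite ?(same_VT nodes1_sub indeg1 outdeg1) //.
by apply/ffunP => k; rewrite !mu1E // E.
Qed.

End Reduction.
End Cherry.

(* Reducing a reticulated cherry (li, lj): the parent pi of li is a
   reticulation with parents pj and q, and the parent pj of lj is a tree node
   with parent g.  The arc pj -> pi is deleted and pi, pj are suppressed: q
   becomes the parent of li and g the parent of lj.  Path counts to nodes other
   than li are unchanged; paths to li now all come through q.  No other node of
   V_T(N) shares the mu-vector of li, lj or pj, and the mu-vectors of the
   remaining nodes determine those in N1.  Hence, again, mu is injective on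
   V_T(N) as soon as it is injective on V_T(N1). *)
Module RetCherry.
Section Reduction.
Variables (n : nat) (V : finType) (N : network V) (li lj pi pj q g : V).
Hypotheses (wfN : wf_network n N) (liL : is_leaf N li) (ljL : is_leaf N lj)
  (li_lj : li != lj) (pi_li : arc N pi li) (pj_lj : arc N pj lj)
  (piR : is_ret N pi) (pjT : is_tree N pj) (pj_pi : arc N pj pi)
  (q_pi : arc N q pi) (q_pj : q != pj) (g_pj : arc N g pj).
Local Notation N1 := (del_arc_nodes N pi pj
   (fun x y => ((x == q) && (y == li)) || ((x == g) && (y == lj)))).

Lemma parent_li y : arc N y li -> y = pi. Proof. exact: (leaf_parent wfN liL pi_li). Qed.
Lemma parent_lj y : arc N y lj -> y = pj. Proof. exact: (leaf_parent wfN ljL pj_lj). Qed.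
Lemma parent_pj y : arc N y pj -> y = g. Proof. exact: (tree_parent wfN pjT g_pj). Qed.
Lemma parent_pi y : arc N y pi -> y = q \/ y = pj. Proof. exact: (ret_parent wfN piR q_pi pj_pi q_pj). Qed.
Lemma child_pi c : arc N pi c -> c = li. Proof. exact: (ret_child wfN piR pi_li). Qed.

Lemma neq_pi_lj : pi != lj. Proof. exact: (leaf_not_parent wfN ljL pi_li). Qed.
Lemma neq_pj_li : pj != li. Proof. exact: (leaf_not_parent wfN liL pj_lj). Qed.
Lemma neq_pi_pj : pi != pj.
Proof. by rewrite eq_sym; exact: (arc_neq wfN pj_pi). Qed.
Lemma neq_g_pi : g != pi.
Proof. by apply: contraTneq g_pj => ->; apply/negP => pipj; move: (acyclicN wfN pipj); rewrite connect1. Qed.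

Lemma child_pj c : arc N pj c -> c = pi \/ c = lj.
Proof. exact: (tree_child wfN pjT pj_pi pj_lj neq_pi_lj). Qed.

Lemma nodes1E x : (x \in nodes N1) = [&& x != pj, x != pi & x \in nodes N].
Proof. by rewrite /= !in_setD1. Qed.

Lemma nodes1_sub : {subset nodes N1 <= nodes N}.
Proof. by move=> x; rewrite nodes1E => /and3P[]. Qed.

Lemma li1 : li \in nodes N1.
Proof.
by rewrite nodes1E (eq_sym li) neq_pj_li (eq_sym li) (arc_neq wfN pi_li) (arc_nodes wfN pi_li).2.
Qed.

Lemma lj1 : lj \in nodes N1.
Proof.
by rewrite nodes1E (eq_sym lj) (arc_neq wfN pj_lj) (eq_sym lj) neq_pi_lj (arc_nodes wfN pj_lj).2.
Qed.

Lemma arcs1 x y : arc N1 x y -> (x \in nodes N1) && (y \in nodes N1).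
Proof.
rewrite /= => /orP[/andP[xy /and4P[x_pi x_pj y_pi y_pj]]|/orP[]/andP[/eqP -> /eqP ->]].
- by case: (arc_nodes wfN xy) => xN yN; rewrite !nodes1E x_pi x_pj y_pi y_pj xN yN.
- by rewrite li1 nodes1E q_pj (arc_neq wfN q_pi) (arc_nodes wfN q_pi).1.
- by rewrite lj1 nodes1E (arc_neq wfN g_pj) neq_g_pi (arc_nodes wfN g_pj).1.
Qed.

(* The new arcs q -> li and g -> lj shortcut q -> pi -> li and g -> pj -> lj. *)
Lemma acyclic1 x y : arc N1 x y -> ~~ connect (arc N1) y x.
Proof.
apply: acyclic_shortcut; first exact: acyclicN wfN.
move=> a b; rewrite /= => /orP[/andP[ab _]|/orP[]/andP[/eqP -> /eqP ->]].
- by exists b; split => //; apply: connect0.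
- by exists pi; split => //; apply: connect1.
- by exists pj; split => //; apply: connect1.
Qed.

(* The arcs of N that survive in N1. *)
Definition kept_arc x c := arc N x c && (c != pi) && (c != pj).

Lemma kept_arc_li x : x \in nodes N1 -> kept_arc x li = false.
Proof.
rewrite nodes1E => /and3P[_ x_pi _]; rewrite /kept_arc.
by case xli: (arc N x li) => //; rewrite (parent_li xli) eqxx in x_pi.
Qed.

Lemma kept_arc_lj x : x \in nodes N1 -> kept_arc x lj = false.
Proof.
rewrite nodes1E => /and3P[x_pj _ _]; rewrite /kept_arc.
by case xlj: (arc N x lj) => //; rewrite (parent_lj xlj) eqxx in x_pj.
Qed.

Lemma children1 x c : x \in nodes N1 ->
  arc N1 x c = [|| kept_arc x c, (x == q) && (c == li) | (x == g) && (c == lj)].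
Proof.
rewrite nodes1E => /and3P[x_pj x_pi _]; rewrite /kept_arc /= x_pj x_pi /=.
by case: (arc N x c) => //=; case: (c != pi); case: (c != pj).
Qed.

Lemma parents1 x c : x \in nodes N1 ->
  arc N1 c x = [|| arc N c x && (c != pi) && (c != pj), (c == q) && (x == li) | (c == g) && (x == lj)].
Proof.
rewrite nodes1E => /and3P[x_pj x_pi _] /=; rewrite x_pj x_pi /= !andbT.
by case: (eqVneq c pi) => [->|c_pi] /=; rewrite ?andbF ?andFb ?andbT.
Qed.

Lemma arc_to_pi x : x \in nodes N1 -> arc N x pi = (x == q).
Proof.
rewrite nodes1E => /and3P[x_pj _ _]; apply/idP/eqP => [xpi|->//].
by case: (parent_pi xpi) => // E; rewrite E eqxx in x_pj.
Qed.

Lemma arc_to_pj x : arc N x pj = (x == g).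
Proof. by apply/idP/eqP => [/parent_pj|->]. Qed.

Lemma sum_childrenN x (F : V -> nat) : x \in nodes N1 ->
  \sum_(c | arc N x c) F c = \sum_(c | kept_arc x c) F c + (x == q) * F pi + (x == g) * F pj.
Proof. by move=> x1; rewrite (sum_split2 _ _ neq_pi_pj) arc_to_pi // arc_to_pj. Qed.

Lemma sum_children1 x (F : V -> nat) : x \in nodes N1 ->
  \sum_(c | arc N1 x c) F c = \sum_(c | kept_arc x c) F c + (x == q) * F li + (x == g) * F lj.
Proof.
move=> x1; rewrite (sum_split2 _ _ li_lj) !children1 // kept_arc_li // kept_arc_lj //.
rewrite !eqxx (eq_sym lj li) (negPf li_lj) !andbF !andbT !orbF; congr (_ + _ + _).
apply: eq_bigl => c; rewrite children1 //.
case: (eqVneq c li) => [->|_]; first by rewrite andbF kept_arc_li.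
by case: (eqVneq c lj) => [->|_] /=; rewrite ?kept_arc_lj // ?andbF ?orbF ?andbT.
Qed.

Lemma sum_children_eq x (F : V -> nat) : x \in nodes N1 -> F pi = F li -> F pj = F lj ->
  \sum_(c | arc N1 x c) F c = \sum_(c | arc N x c) F c.
Proof. by move=> x1 Fi Fj; rewrite sum_children1 // sum_childrenN // Fi Fj. Qed.

Lemma outdeg1 x : x \in nodes N1 -> outdeg N1 x = outdeg N x.
Proof.
move=> x1; rewrite outdegE; last by move=> y /arcs1/andP[].
rewrite outdegE; last by move=> y /(arc_nodes wfN)[].
exact: sum_children_eq.
Qed.

(* Only li and lj change their parent (to q and g respectively). *)
Lemma indeg1 x : x \in nodes N1 -> indeg N1 x = indeg N x.
Proof.
move=> x1; rewrite indegE; last by move=> y /arcs1/andP[].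
rewrite indegE; last by move=> y /(arc_nodes wfN)[].
have single l r s : is_leaf N l -> arc N r l -> (forall c, arc N1 c l = (c == s)) ->
    \sum_(c | arc N1 c l) 1 = \sum_(c | arc N c l) 1.
  move=> lL rl E1; rewrite (eq_bigl (pred1 s)); last exact: E1.
  by rewrite big_pred1_eq (big_pred1 r) // => c; apply/idP/eqP => [/(leaf_parent wfN lL rl)|->].
case: (eqVneq x li) => [->|x_li].
  apply: (single _ _ q liL pi_li) => c; rewrite parents1 ?li1 // eqxx (negPf li_lj) !andbF orbF andbT.
  by case cl: (arc N c li) => //=; rewrite (parent_li cl) eqxx.
case: (eqVneq x lj) => [->|x_lj].
  apply: (single _ _ g ljL pj_lj) => c; rewrite parents1 ?lj1 // eqxx (eq_sym lj) (negPf li_lj) !andbF andbT /=.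
  by case cl: (arc N c lj) => //=; rewrite (parent_lj cl) eqxx andbF.
apply: eq_bigl => c; rewrite parents1 // (negPf x_li) (negPf x_lj) !andbF !orbF.
case cx: (arc N c x) => //=.
have c_pi : c != pi by apply: contra_neq x_li => E; rewrite E in cx; apply: child_pi.
have c_pj : c != pj.
  apply: contraTneq x1 => E; rewrite E in cx; rewrite nodes1E.
  case: (child_pj cx) x_lj => -> x_lj; first by rewrite eqxx /= andbF.
  by rewrite eqxx in x_lj.
by rewrite c_pi c_pj.
Qed.

Lemma wf1 : wf_network n N1.
Proof. exact: (wf_subnetwork nodes1_sub indeg1 outdeg1 wfN _ arcs1 acyclic1). Qed.

Lemma types1 x : x \in nodes N1 ->
  [/\ is_root N1 x = is_root N x, is_leaf N1 x = is_leaf N x,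
      is_tree N1 x = is_tree N x & is_ret N1 x = is_ret N x].
Proof. exact: (same_types nodes1_sub indeg1 outdeg1). Qed.

Lemma npaths_from_pi x : npaths N pi x = (pi == x) + (li == x).
Proof. by rewrite (npaths_firstN wfN) (sum_child_ret wfN _ piR pi_li) (npaths_from_leaf wfN _ liL). Qed.

Lemma npaths_from_pj x : npaths N pj x = (pj == x) + ((pi == x) + (li == x)) + (lj == x).
Proof.
rewrite (npaths_firstN wfN) (sum_children wfN _ pjT pj_pi pj_lj neq_pi_lj).
by rewrite npaths_from_pi (npaths_from_leaf wfN _ ljL) addnA.
Qed.

Lemma npaths1 w x : w \in nodes N1 -> x \in nodes N1 -> x != li ->
  npaths N1 w x = npaths N w x.
Proof.
move=> w1 x1 x_li; apply: (npaths_unique_solution acyclic1 (f := npaths N ^~ x)) w1.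
  by move=> y z _ /arcs1/andP[].
move=> y y1; rewrite (npaths_firstN wfN); congr addn; apply/esym/sum_children_eq => //.
all: move: x1; rewrite nodes1E => /and3P[x_pj x_pi _].
all: rewrite ?npaths_from_pj ?npaths_from_pi ?(npaths_from_leaf wfN _ liL) ?(npaths_from_leaf wfN _ ljL).
all: by rewrite !(eq_sym _ x) ?(negPf x_pj) (negPf x_pi) (negPf x_li).
Qed.

(* In N1 every nontrivial path to li ends with the new arc q -> li. *)
Lemma npaths1_li w : w \in nodes N1 -> npaths N1 w li = (w == li) + npaths N w q.
Proof.
move=> w1; apply: (npaths_unique_solution acyclic1 (f := fun w => (w == li) + npaths N w q)) w1.
  by move=> y z _ /arcs1/andP[].
have q_li : q != li := leaf_not_parent wfN liL q_pi.
have q_lj : q != lj := leaf_not_parent wfN ljL q_pi.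
move=> y y1; congr addn; rewrite big_split sum_indicator children1 // kept_arc_li //.
rewrite eqxx (negPf li_lj) !andbF andbT orbF /= (npaths_firstN wfN) sum_children_eq //.
  by rewrite npaths_from_pi (npaths_from_leaf wfN _ liL) !(eq_sym _ q) (negPf q_li) (negPf (arc_neq wfN q_pi)).
rewrite npaths_from_pj (npaths_from_leaf wfN _ ljL) !(eq_sym _ q).
by rewrite (negPf q_pj) (negPf (arc_neq wfN q_pi)) (negPf q_li) (negPf q_lj).
Qed.

Lemma li1_leaf : is_leaf N1 li. Proof. by case: (types1 li1) => _ -> _ _. Qed.

Lemma pi_not_VT u : u \in VT N -> u != pi.
Proof.
rewrite inE => /orP[] uT; apply: contraTneq uT => ->; apply/negP.
  by move/leaf_not_ret; rewrite piR.
by move/tree_not_ret; rewrite piR.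
Qed.

Lemma mu1_ret w : w \in nodes N1 -> mu N1 n w ord0 + npaths N w pi = mu N n w ord0.
Proof.
move=> w1; rewrite !mu_ret [RHS](bigD1 pi) /=; last by rewrite (arc_nodes wfN pi_li).1 piR.
rewrite addnC; congr addn; apply: eq_big => [h|h /andP[h1 hR]].
  rewrite -andbA; apply: (@select_surviving _ (nodes N) pi pj (is_ret N1) (fun h => is_ret N h && (h != pi))).
  - by move=> x x1; case: (types1 x1) => _ _ _ ->; move: x1; rewrite nodes1E => /and3P[_ -> _]; rewrite andbT.
  - by rewrite eqxx andbF.
  - by rewrite (negPf (tree_not_ret pjT)).
apply: npaths1 => //; apply: contraTneq hR => ->.
by case: (types1 li1) => _ _ _ ->; apply: leaf_not_ret liL.
Qed.

Lemma mu1_li w : w \in nodes N1 -> mu N1 n w (inord (lab N li)) = (w == li) + npaths N w q.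
Proof. by move=> w1; rewrite (mu_leaf wf1 w li1_leaf) npaths1_li. Qed.

Lemma mu1_other w k : w \in nodes N1 -> val k != 0 -> val k != lab N li ->
  mu N1 n w k = mu N n w k.
Proof.
move=> w1 k0 k_li; rewrite /mu !ffunE /= (negPf k0).
apply: eq_big => [h|h /andP[h1 /andP[_ /eqP hk]]].
  apply: (@select_surviving _ (nodes N) pi pj (fun x => is_leaf N1 x && (lab N x == k))
    (fun x => is_leaf N x && (lab N x == k))).
  - by move=> x /types1[_ -> _ _].
  - by apply/negP => /andP[/leaf_not_ret]; rewrite piR.
  - by apply/negP => /andP[/leaf_not_tree]; rewrite pjT.
apply: npaths1 => //; apply: contra_neq k_li => E.
by rewrite -E hk.
Qed.

Lemma npaths_le_mu_ret w : npaths N w pi <= mu N n w ord0.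
Proof. by rewrite mu_ret (bigD1 pi) /= ?(arc_nodes wfN pi_li).1 ?piR // leq_addr. Qed.

Lemma mu_ret_li : mu N n li ord0 = 0.
Proof.
rewrite mu_ret; apply: big1 => h /andP[_ hR]; rewrite (npaths_from_leaf wfN _ liL).
by case: eqVneq => // E; move: (leaf_not_ret liL); rewrite E hR.
Qed.

(* A node with the mu-vector of li would have a path to the reticulation pi,
   while li has none. *)
Lemma mu_li_unique v : mu N n v = mu N n li -> v = li.
Proof.
move=> E; apply/eqP/negPn/negP => v_li.
have : npaths N v li = 1.
  by rewrite -(mu_leaf wfN v liL) E (mu_leaf wfN li liL) (npaths_from_leaf wfN _ liL) eqxx.
rewrite (npaths_to_leaf wfN _ liL pi_li) (negPf v_li) add0n => one.
by move: (npaths_le_mu_ret v); rewrite E mu_ret_li one.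
Qed.

(* A node with the mu-vector of lj reaches lj, hence pj, hence li. *)
Lemma mu_lj_unique v : mu N n v = mu N n lj -> v = lj.
Proof.
move=> E; apply/eqP/negPn/negP => v_lj.
have : npaths N v lj = 1.
  by rewrite -(mu_leaf wfN v ljL) E (mu_leaf wfN lj ljL) (npaths_from_leaf wfN _ ljL) eqxx.
rewrite (npaths_to_leaf wfN _ ljL pj_lj) (negPf v_lj) add0n => one.
have : 0 < npaths N v li.
  rewrite (npaths_gt0N wfN); apply: connect_trans (connect1 pi_li).
  by apply: connect_trans (connect1 pj_pi); rewrite -(npaths_gt0N wfN) one.
by rewrite -(mu_leaf wfN v liL) E (mu_leaf wfN lj liL) (npaths_from_leaf wfN _ ljL) eq_sym (negPf li_lj).
Qed.

(* A node v of V_T(N) other than pj with the mu-vector of pj has one path to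
   pj (it has one path to lj) and none to q (it has one path to li). *)
Lemma mu_pj_paths v : v \in VT N -> v != pj -> mu N n v = mu N n pj ->
  npaths N v pj = 1 /\ npaths N v q = 0.
Proof.
move=> vT v_pj E.
have to_lj : npaths N v lj = 1.
  rewrite -(mu_leaf wfN _ ljL) E (mu_leaf wfN _ ljL) npaths_from_pj.
  by rewrite (negPf (arc_neq wfN pj_lj)) (negPf neq_pi_lj) (negPf li_lj) eqxx.
have to_li : npaths N v li = 1.
  rewrite -(mu_leaf wfN _ liL) E (mu_leaf wfN _ liL) npaths_from_pj.
  by rewrite (negPf neq_pj_li) (negPf (arc_neq wfN pi_li)) eqxx (eq_sym lj) (negPf li_lj).
have v_lj : v != lj.
  by apply/eqP => Ev; move: to_li; rewrite Ev (npaths_from_leaf wfN _ ljL) eq_sym (negPf li_lj).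
have v_li : v != li.
  by apply/eqP => Ev; move: to_lj; rewrite Ev (npaths_from_leaf wfN _ liL) (negPf li_lj).
have one_pj : npaths N v pj = 1 by move: to_lj; rewrite (npaths_to_leaf wfN _ ljL pj_lj) (negPf v_lj).
split => //; move: to_li; rewrite (npaths_to_leaf wfN _ liL pi_li) (negPf v_li) add0n.
rewrite (npaths_lastN wfN) (negPf (pi_not_VT vT)).
by rewrite (sum_parents_ret wfN _ piR q_pi pj_pi q_pj) one_pj addn1 => -[].
Qed.

(* A child of such a v avoiding pj reaches a leaf other than li and lj, which
   pj does not. *)
Lemma mu_pj_unique v : v \in VT N -> mu N n v = mu N n pj -> v = pj.
Proof.
move=> vT E; apply/eqP/negPn/negP => v_pj.
have [one_pj no_q] := mu_pj_paths vT v_pj E.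
have v_pi := pi_not_VT vT.
have [c [l [vc c0 lL cl]]] := escape_leaf wfN vT v_pj one_pj.
have c_no_q : npaths N c q = 0 by apply/eqP; rewrite -leqn0 -no_q; exact: (npaths_child_le wfN q vc).
have c_pi : c != pi.
  apply: contra_neq v_pj => E'; rewrite E' in vc; case: (parent_pi vc) => // vq.
  by move: no_q; rewrite vq (npaths_firstN wfN) eqxx.
have c_lj : c != lj by apply: contra_neq v_pj => E'; rewrite E' in vc; apply: parent_lj.
have c_li : c != li by apply: contra_neq v_pi => E'; rewrite E' in vc; apply: parent_li.
have l_lj : l != lj.
  apply: contraTneq cl => ->.
  by rewrite -(npaths_gt0N wfN) (npaths_to_leaf wfN _ ljL pj_lj) (negPf c_lj) c0.
have l_li : l != li.
  apply: contraTneq cl => ->.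
  rewrite -(npaths_gt0N wfN) (npaths_to_leaf wfN _ liL pi_li) (negPf c_li) (npaths_lastN wfN).
  by rewrite (negPf c_pi) (sum_parents_ret wfN _ piR q_pi pj_pi q_pj) c0 c_no_q.
have : 0 < npaths N v l by rewrite (npaths_gt0N wfN); apply: connect_trans cl; apply: connect1.
rewrite -(mu_leaf wfN v lL) E (mu_leaf wfN pj lL) npaths_from_pj.
have pj_l : pj != l by apply: contraTneq lL => <-; apply/negP => /leaf_not_tree; rewrite pjT.
have pi_l : pi != l by apply: contraTneq lL => <-; apply/negP => /leaf_not_ret; rewrite piR.
by rewrite (negPf pj_l) (negPf pi_l) !(eq_sym _ l) (negPf l_li) (negPf l_lj).
Qed.

(* For surviving nodes other than li and lj, equal mu-vectors in N give equal
   path counts to q, hence equal mu-vectors in N1. *)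
Lemma mu1_eq u v : u \in nodes N1 -> v \in nodes N1 -> u != li -> v != li ->
  u != lj -> v != lj -> mu N n u = mu N n v -> mu N1 n u = mu N1 n v.
Proof.
move=> u1 v1 u_li v_li u_lj v_lj E.
have [u_pi v_pi] : u != pi /\ v != pi by move: u1 v1; rewrite !nodes1E => /and3P[_ -> _] /and3P[_ -> _].
have Epj : npaths N u pj = npaths N v pj.
  have : npaths N u lj = npaths N v lj by rewrite -!(mu_leaf wfN _ ljL) E.
  by rewrite !(npaths_to_leaf wfN _ ljL pj_lj) (negPf u_lj) (negPf v_lj).
have Epi : npaths N u pi = npaths N v pi.
  have : npaths N u li = npaths N v li by rewrite -!(mu_leaf wfN _ liL) E.
  by rewrite !(npaths_to_leaf wfN _ liL pi_li) (negPf u_li) (negPf v_li).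
have Eq : npaths N u q = npaths N v q.
  move: Epi; rewrite !(npaths_lastN wfN _ pi) (negPf u_pi) (negPf v_pi).
  by rewrite !add0n !(sum_parents_ret wfN _ piR q_pi pj_pi q_pj) Epj => /addIn.
apply/ffunP => k; case: (eqVneq (val k) 0) => [k0|k0].
  have -> : k = ord0 by apply: val_inj.
  by apply: (addIn (x := npaths N u pi)); rewrite {2}Epi !mu1_ret // E.
case: (eqVneq (val k) (lab N li)) => [k_li|k_li]; last by rewrite !mu1_other // E.
have -> : k = inord (lab N li) by apply: val_inj; rewrite /= k_li inordK // (lab_lt wfN liL).
by rewrite !mu1_li // (negPf u_li) (negPf v_li) Eq.
Qed.

Lemma ret_cherry_mu_injective :
  {in VT N1 &, injective (mu N1 n)} -> {in VT N &, injective (mu N n)}.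
Proof.
move=> inj1 u v uT vT E.
case: (eqVneq u li) => [Eu|u_li]; first by subst u; rewrite (mu_li_unique (esym E)).
case: (eqVneq u lj) => [Eu|u_lj]; first by subst u; rewrite (mu_lj_unique (esym E)).
case: (eqVneq u pj) => [Eu|u_pj]; first by subst u; rewrite (mu_pj_unique vT (esym E)).
case: (eqVneq v li) => [Ev|v_li]; first by subst v; rewrite (mu_li_unique E).
case: (eqVneq v lj) => [Ev|v_lj]; first by subst v; rewrite (mu_lj_unique E).
case: (eqVneq v pj) => [Ev|v_pj]; first by subst v; rewrite (mu_pj_unique uT E).
have u1 : u \in nodes N1 by rewrite nodes1E u_pj (pi_not_VT uT) (VT_nodes uT).
have v1 : v \in nodes N1 by rewrite nodes1E v_pj (pi_not_VT vT) (VT_nodes vT).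
by apply: inj1; rewrite ?(same_VT nodes1_sub indeg1 outdeg1) //; apply: mu1_eq.
Qed.

End Reduction.
End RetCherry.

(* In the network I_x every node of V_T is the leaf x (it has a parent). *)
Lemma trivial_mu_injective n (V : finType) (N : network V) :
  is_trivial N -> {in VT N &, injective (mu N n)}.
Proof.
case=> r [l [_ _ _ only_arc]].
have VT_l u : u \in VT N -> u = l.
  rewrite inE => uT.
  have : 0 < indeg N u by case/orP: uT => /andP[/andP[_ /eqP ->]].
  by case/card_gt0P => y; rewrite inE => /andP[_ /only_arc[]].
by move=> u v /VT_l -> /VT_l ->.
Qed.

Lemma reducible_mu_injective n (V : finType) (S : seq (nat * nat)) (N N' : network V) :
  wf_network n N -> reduce_seq N S N' -> is_trivial N' -> {in VT N &, injective (mu N n)}.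
Proof.
elim: S N => [|s S IH] N wfN /=; first by move=> -> /trivial_mu_injective.
case=> N1 [[li [lj [pi [pj [[liL ljL li_lj] [[_ _ pi_li pj_lj] reduction]]]]]] red1] triv.
case: reduction => [[E [g [g_p EN1]]]|[piR pjT pj_pi [q [g [q_pi q_pj g_pj EN1]]]]]; subst N1.
  subst pj.
  apply: (Cherry.cherry_mu_injective wfN liL ljL li_lj pi_li pj_lj g_p).
  exact: IH (Cherry.wf1 wfN liL ljL li_lj pi_li pj_lj g_p) red1 triv.
apply: (RetCherry.ret_cherry_mu_injective wfN liL ljL li_lj pi_li pj_lj piR pjT pj_pi q_pi q_pj g_pj).
exact: IH (RetCherry.wf1 wfN liL ljL li_lj pi_li pj_lj piR pjT pj_pi q_pi q_pj g_pj) red1 triv.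
Qed.

Theorem mainTheorem8 (n : nat) (V : finType) (N : network V) :
  is_network N n -> orchard N ->
  (forall u v, u \in VT N -> v \in VT N -> mu N n u = mu N n v -> u = v) /\
  uniq [seq mu N n u | u <- enum (VT N)].
Proof.
move=> netN [S [N' [red triv]]].
have inj := reducible_mu_injective (network_wf netN) red triv.
split; first exact: inj.
by rewrite map_inj_in_uniq ?enum_uniq // => u v; rewrite !mem_enum; apply: inj.
Qed.
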